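(* Let $\mathbf P$ be a cyclic CFSM protocol with the rational channel property and communication graph $(N,E)$, and let $\beta\in E$. A composite state $S'$ is not stable if and only if there is a family of regular sets $Q(S)\subseteq M_\beta^*$, $S\in\prod_{j\in N}K_j$, consistent with respect to $\mathbf P$ and $\beta$, such that $\lambda\in Q(S^0)$ and $\lambda\notin Q(S')$.
   Context: A CFSM protocol $\mathbf P$ has a finite directed communication graph $G=(N,E)$ (edge $\xi$ has tail $-\xi$, head $+\xi$), pairwise disjoint finite message sets $M_\xi$, and for each $j\in N$ a finite state machine $F_j=(K_j,\Sigma_j,T_j,h_j)$: finite state set $K_j$, initial state $h_j$, alphabet $\Sigma_j=\{+b: b\in M_\xi,\ j=+\xi\}\cup\{-b: b\in M_\xi,\ j=-\xi\}$, transitions $T_j\subseteq K_j\times\Sigma_j\times K_j$ ($+b$ = receive, $-b$ = send). A composite state is $S=(p_j:j\in N)$; a channel content is $C=(x_\xi:\xi\in E)$, $x_\xi\in M_\xi^*$; global states are pairs $(S,C)$; $C^0$ has all components equal to the empty word $\lambda$; $S^0=(h_j:j\in N)$ and $(S^0,C^0)$ is the initial global state. A step: some machine $F_i$ takes $p_i\xrightarrow{-b}q_i$ with $b\in M_\beta$, $i=-\beta$, appending $b$ to the end of $x_\beta$; or takes $p_i\xrightarrow{+b}q_i$ with $b\in M_\beta$, $i=+\beta$, provided $x_\beta$ begins with $b$, removing it; all else unchanged. $\vdash^*$ means reachability by finitely many steps. A composite state $S$ is stable if $(S^0,C^0)\vdash^*(S,C^0)$. $\mathbf L(S)=\{C:(S^0,C^0)\vdash^*(S,C)\}$.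 A subset of $\prod_{\xi\in E}M_\xi^*$ is rational if it belongs to the smallest family containing finite sets and closed under union, componentwise product and Kleene star; $\mathbf P$ has the rational channel property if every $\mathbf L(S)$ is rational. $\mathbf P$ is cyclic if $G$ is a directed cycle. A family $Q(S)\subseteq M_\beta^*$ is consistent with respect to $\mathbf P$ and $\beta$ if whenever $(S,(x_\xi))\vdash^*(S',(x'_\xi))$ with $x_\xi=x'_\xi=\lambda$ for $\xi\neq\beta$ and $x_\beta\in Q(S)$, then $x'_\beta\in Q(S')$. *)

From Stdlib Require Import Relations List.
From mathcomp Require Import all_boot.

Set Implicit Arguments.
Unset Strict Implicit.
Unset Printing Implicit Defensive.

Section Rational.
Variables (T : Type) (op : T -> T -> T) (e : T).

Inductive kstar (A : T -> Prop) : T -> Prop :=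
| kstar_nil : kstar A e
| kstar_cons a b : A a -> kstar A b -> kstar A (op a b).

Inductive rational_in : (T -> Prop) -> Prop :=
| rat_fin (s : list T) : rational_in (fun c => List.In c s)
| rat_union A B : rational_in A -> rational_in B ->
    rational_in (fun c => A c \/ B c)
| rat_prod A B : rational_in A -> rational_in B ->
    rational_in (fun c => exists a b, A a /\ B b /\ c = op a b)
| rat_star A : rational_in A -> rational_in (kstar A)
| rat_ext A B : rational_in A -> (forall c, A c <-> B c) -> rational_in B.
End Rational.

Definition regular (X : Type) (L : seq X -> Prop) : Prop :=
  rational_in (@cat X) [::] L.

(* Total message alphabet: a message b of edge xi is the pair (xi, b);  *)
(* this makes the sets M_xi pairwise disjoint by construction.         *)
Inductive action (E : Type) (M : E -> Type) :=
| Send of {xi : E & M xi}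
| Recv of {xi : E & M xi}.

Record protocol := Protocol {
  node : finType;
  edge : finType;
  tl : edge -> node;
  hd : edge -> node;
  msg : edge -> finType;
  state : node -> finType;
  init : forall j, state j;
  trans : forall j, state j -> action msg -> state j -> Prop;
  trans_alpha : forall j p a q, @trans j p a q ->
    match a with
    | Send b => tl (tag b) = j
    | Recv b => hd (tag b) = j
    end
}.

Arguments state : clear implicits.
Arguments msg : clear implicits.
Arguments init : clear implicits.

Definition cstate (P : protocol) := {dffun forall j : node P, state P j}.
Definition content (P : protocol) := {dffun forall xi : edge P, seq (msg P xi)}.
Definition gstate (P : protocol) := (cstate P * content P)%type.

Definition S0 (P : protocol) : cstate P := finfun (fun j => init P j).
Definition C0 (P : protocol) : content P := finfun (fun xi => [::] : seq (msg P xi)).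

Arguments S0 : clear implicits.
Arguments C0 : clear implicits.

Inductive step (P : protocol) : gstate P -> gstate P -> Prop :=
| step_send (S S' : cstate P) (C C' : content P) (i : node P)
    (b : {xi : edge P & msg P xi}) (q : state P i) :
    trans (S i) (Send b) q ->
    S' i = q -> (forall j, j <> i -> S' j = S j) ->
    C' (tag b) = rcons (C (tag b)) (tagged b) ->
    (forall xi, xi <> tag b -> C' xi = C xi) ->
    step (S, C) (S', C')
| step_recv (S S' : cstate P) (C C' : content P) (i : node P)
    (b : {xi : edge P & msg P xi}) (q : state P i) :
    trans (S i) (Recv b) q ->
    S' i = q -> (forall j, j <> i -> S' j = S j) ->
    C (tag b) = tagged b :: C' (tag b) ->
    (forall xi, xi <> tag b -> C' xi = C xi) ->
    step (S, C) (S', C').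

Definition reach (P : protocol) : gstate P -> gstate P -> Prop :=
  clos_refl_trans (gstate P) (@step P).

Definition stable (P : protocol) (S : cstate P) : Prop :=
  reach (S0 P, C0 P) (S, C0 P).

Definition Lang (P : protocol) (S : cstate P) : content P -> Prop :=
  fun C => reach (S0 P, C0 P) (S, C).

Definition content_cat (P : protocol) (a b : content P) : content P :=
  finfun (fun xi => a xi ++ b xi).

Definition rational_channel_property (P : protocol) : Prop :=
  forall S : cstate P, rational_in (@content_cat P) (C0 P) (Lang S).

Definition cyclic (P : protocol) : Prop :=
  exists (n : nat) (f : 'I_n.+1 -> node P) (g : 'I_n.+1 -> edge P),
    bijective f /\ bijective g /\
    forall i, tl (g i) = f i /\ hd (g i) = f (ordS i).

Definition consistent (P : protocol) (beta : edge P)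
    (Q : cstate P -> seq (msg P beta) -> Prop) : Prop :=
  forall (S S' : cstate P) (C C' : content P),
    reach (S, C) (S', C') ->
    (forall xi, xi <> beta -> C xi = [::]) ->
    (forall xi, xi <> beta -> C' xi = [::]) ->
    Q S (C beta) -> Q S' (C' beta).
Arguments consistent {P} beta Q.

(* Keep,
   for each S, only the contents of L(S) that are empty off the channel beta
   and read off their beta-component: this family Q is consistent because
   reachability composes, it contains the empty word at S^0, and it contains
   it at S exactly when S is stable.  Each Q(S) is regular because projecting
   a rational set of contents in this way commutes with finite sets, unions,
   products and stars: a product of contents is empty off beta iff both
   factors are.  Conversely, consistency transports the empty word from S^0
   along any run reaching (S', C^0). *)

From Stdlib Require Import Relations Classical.
From mathcomp Require Import all_boot.

Set Implicit Arguments.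
Unset Strict Implicit.
Unset Printing Implicit Defensive.

Section ChannelProjection.
Variables (P : protocol) (beta : edge P).

Definition on_channel (c : content P) : Prop :=
  forall xi, xi <> beta -> c xi = [::].

Definition channel_proj (A : content P -> Prop) (x : seq (msg P beta)) : Prop :=
  exists c, A c /\ on_channel c /\ c beta = x.

Lemma on_channel_C0 : on_channel (C0 P).
Proof. by move=> xi _; rewrite ffunE. Qed.

Lemma on_channel_cat a b :
  on_channel (content_cat a b) <-> on_channel a /\ on_channel b.
Proof.
split=> [ab0 | [a0 b0] xi ne]; last by rewrite ffunE a0 // b0.
by split=> xi /ab0; rewrite ffunE; case: (a xi); case: (b xi).
Qed.

Lemma on_channel_inj c d :
  on_channel c -> on_channel d -> c beta = d beta -> c = d.
Proof.
move=> c0 d0 cd; apply/ffunP=> xi.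
by case: (eqVneq xi beta) => [-> // | /eqP ne]; rewrite c0 // d0.
Qed.

Lemma channel_proj_ext A B :
  (forall c, A c <-> B c) -> forall x, channel_proj A x <-> channel_proj B x.
Proof. by move=> AB x; split=> -[c [/AB Bc cx]]; exists c. Qed.

Lemma channel_proj_cons a s x :
  channel_proj (fun c => List.In c (a :: s)) x <->
  (on_channel a /\ a beta = x) \/ channel_proj (fun c => List.In c s) x.
Proof.
split=> [[c [[<- | sc] cx]] | [ax | [c [sc cx]]]].
- by left.
- by right; exists c.
- by exists a; split; [left|].
- by exists c; split; [right|].
Qed.

Lemma regular_channel_proj_fin (s : seq (content P)) :
  regular (channel_proj (fun c => List.In c s)).
Proof.
elim: s => [|a s IHs].
  by apply: rat_ext (rat_fin _ _ [::]) _ => x; split=> [[] | [c [[] _]]].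
have [a0 | a0] := classic (on_channel a).
- apply: rat_ext (rat_union (rat_fin _ _ [:: a beta]) IHs) _ => x.
  rewrite channel_proj_cons /=.
  by split=> [[[<- | []] | ] | [[_ <-] | ]]; auto.
- apply: rat_ext IHs _ => x; rewrite channel_proj_cons.
  split=> [|[[/a0 []] | //]]; by right.
Qed.

Lemma channel_proj_union A B x :
  channel_proj (fun c => A c \/ B c) x <-> channel_proj A x \/ channel_proj B x.
Proof.
split=> [[c [[Ac | Bc] cx]] | [[c [Ac cx]] | [c [Bc cx]]]].
- by left; exists c.
- by right; exists c.
- by exists c; split; [left|].
- by exists c; split; [right|].
Qed.

Lemma channel_proj_prod A B x :
  channel_proj (fun c => exists a b, A a /\ B b /\ c = content_cat a b) x <->
  exists x1 x2, channel_proj A x1 /\ channel_proj B x2 /\ x = x1 ++ x2.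
Proof.
split.
- move=> [_ [[a [b [Aa [Bb ->]]]] [/on_channel_cat [a0 b0] <-]]].
  exists (a beta), (b beta); split; first by exists a.
  by split; [exists b | rewrite ffunE].
- move=> [_ [_ [[a [Aa [a0 <-]]] [[b [Bb [b0 <-]]] ->]]]].
  exists (content_cat a b); split; first by exists a, b.
  by split; [apply/on_channel_cat | rewrite ffunE].
Qed.

Lemma channel_proj_star A x :
  channel_proj (kstar (@content_cat P) (C0 P) A) x <->
  kstar cat [::] (channel_proj A) x.
Proof.
split.
- move=> [c [Ac [c0 <-]]]; elim: Ac c0 => [|a b Aa _ IHb].
    by rewrite ffunE; constructor.
  move=> /on_channel_cat [a0 b0]; rewrite ffunE.
  by constructor; [exists a | exact: IHb].
- elim=> [|_ x2 [a [Aa [a0 <-]]] _ [c [Ac [c0 <-]]]].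
    by exists (C0 P); split; [constructor | split; [exact: on_channel_C0 | rewrite ffunE]].
  exists (content_cat a c); split; first by constructor.
  by split; [apply/on_channel_cat | rewrite ffunE].
Qed.

Lemma regular_channel_proj A :
  rational_in (@content_cat P) (C0 P) A -> regular (channel_proj A).
Proof.
elim=> {A} [s | A B _ rA _ rB | A B _ rA _ rB | A _ rA | A B _ rA AB].
- exact: regular_channel_proj_fin.
- exact: rat_ext (rat_union rA rB) (fun x => iff_sym (channel_proj_union A B x)).
- exact: rat_ext (rat_prod rA rB) (fun x => iff_sym (channel_proj_prod A B x)).
- exact: rat_ext (rat_star rA) (fun x => iff_sym (channel_proj_star A x)).
- exact: rat_ext rA (channel_proj_ext AB).
Qed.

Lemma consistent_channel_proj_Lang :
  consistent beta (fun S => channel_proj (Lang S)).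
Proof.
move=> S S' C C' SC_S'C' Cbeta C'beta [D [LD [Dbeta DC]]].
have eDC : D = C by apply: on_channel_inj.
by exists C'; split; first by apply: rt_trans LD _; rewrite eDC.
Qed.

Lemma stable_channel_proj_Lang S : stable S <-> channel_proj (Lang S) [::].
Proof.
split=> [st | [C [LC [Cbeta Cnil]]]].
  by exists (C0 P); split; [| split; [exact: on_channel_C0 | rewrite ffunE]].
have eC : C = C0 P by apply: on_channel_inj; [| exact: on_channel_C0 | rewrite ffunE].
by rewrite eC in LC.
Qed.

End ChannelProjection.

Arguments channel_proj {P} beta A x.

Lemma consistent_stable (P : protocol) (beta : edge P) Q (S : cstate P) :
  consistent beta Q -> Q (S0 P) [::] -> stable S -> Q S [::].
Proof.
move=> cQ QS0 st; have C00 := @on_channel_C0 P beta.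
by have := cQ _ _ _ _ st C00 C00; rewrite !ffunE; apply.
Qed.

Theorem theorem8p6 (P : protocol) (beta : edge P) (S' : cstate P) :
  cyclic P -> rational_channel_property P ->
  (~ stable S' <->
   exists Q : cstate P -> seq (msg P beta) -> Prop,
     (forall S : cstate P, regular (Q S)) /\
     consistent beta Q /\
     Q (S0 P) [::] /\ ~ Q S' [::]).
Proof.
move=> _ ratP; split.
- move=> unstable; exists (fun S => channel_proj beta (Lang S)); split.
    by move=> S; apply: regular_channel_proj.
  split; first exact: consistent_channel_proj_Lang.
  split; first by apply/stable_channel_proj_Lang; exact: rt_refl.
  by move=> /stable_channel_proj_Lang.
- by move=> [Q [_ [cQ [QS0 QS']]]] /(consistent_stable cQ QS0).
Qed.
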